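(* For $a\in\mathbb{R}$ let $(g_1,g_3)$ be the maximal solution of \[ \dot g_1=\frac{a^2+g_3^2}{g_1g_3},\qquad \dot g_3=\frac{a^2-g_3^2}{g_1^2},\qquad g_1(0)=g_3(0)=1 \] (the reduced left-invariant generalized Ricci flow on the Heisenberg group $H_3$ starting from the standard metric and $H_0=a\,e^{123}$). Its maximal interval of existence is of the form $(T_{\min}(a),\infty)$ with $T_{\min}(a)<0$, where $T_{\min}$ is an even function of $a$ with $T_{\min}(0)=-\tfrac13$, and \[ \lim_{t\to T_{\min}(a)^+}g_1(t)=0,\qquad \lim_{t\to T_{\min}(a)^+}g_3(t)=\begin{cases}\infty,&|a|<1,\\ 1,&a=\pm1,\\ 0,&|a|>1.\end{cases} \]
   Context: The system arises from the gauge-fixed generalized Ricci flow $\dot g=-2\mathrm{Rc}_g+\tfrac12H\circ_gH$, $\dot H=-\Delta_gH$ on left-invariant data on the Heisenberg group, with metric $g(t)=g_1(t)(e^1\otimes e^1+e^2\otimes e^2)+g_3(t)e^3\otimes e^3$, $[e_1,e_2]=e_3$, and $H(t)\equiv a\,e^{123}$. *)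

From Stdlib Require Import Reals Lra.
Open Scope R_scope.

(* (g1,g3) solves the reduced generalized Ricci flow ODE with parameter a
   on the set I (intended: an open interval containing 0), with positive
   components (positive-definite metric), and g1(0)=g3(0)=1. *)
Definition sol_on (a : R) (I : R -> Prop) (g1 g3 : R -> R) : Prop :=
  g1 0 = 1 /\ g3 0 = 1 /\
  forall t, I t ->
    0 < g1 t /\ 0 < g3 t /\
    derivable_pt_lim g1 t ((a ^ 2 + g3 t ^ 2) / (g1 t * g3 t)) /\
    derivable_pt_lim g3 t ((a ^ 2 - g3 t ^ 2) / (g1 t ^ 2)).

Definition right_lim (f : R -> R) (T l : R) : Prop :=
  forall eps, 0 < eps -> exists delta, 0 < delta /\
    forall t, T < t < T + delta -> Rabs (f t - l) < eps.

Definition right_lim_infty (f : R -> R) (T : R) : Prop :=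
  forall M, exists delta, 0 < delta /\
    forall t, T < t < T + delta -> M < f t.

From Stdlib Require Import Reals Lra Psatz ClassicalEpsilon Ranalysis5.
From Coquelicot Require Import Coquelicot.
Open Scope R_scope.

(* Along a solution, g1 (a^2 / g3 - g3) is constant, equal to a^2 - 1, so g1 is a
   function of g3 and the system collapses to one autonomous scalar equation.  For
   a^2 < 1 put b = a^2 and V = 1/g3, for a^2 > 1 put b = 1/a^2 and V = g3: then
   0 <= b < 1, g1 = (1 - b) V / (1 - b V^2) and V' = K (1 - b V^2)^3 / V^2 for a
   constant K > 0.  This separates as Fb b V = K t + Fb b 1, where
   Fb b v = int_0^v u^2 / (1 - b u^2)^3 du increases from 0 to +oo on [0, b^(-1/2)).
   Hence V lives exactly on t > - Fb b 1 / K and tends to 0 at that time, and so does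
   g1.  For a^2 = 1 the conservation law forces g3 = 1, and then g1 = sqrt (1 + 4 t).
   Tmin only depends on a^2, and Fb 0 1 = 1/3. *)

Lemma derivable_pt_lim_eq_deriv (f : R -> R) (x l l' : R) :
  derivable_pt_lim f x l -> l = l' -> derivable_pt_lim f x l'.
Proof. now intros H <-. Qed.

Lemma Derive_eta (f : R -> R) (x l : R) :
  is_derive f x l -> Derive (fun y => f y) x = l.
Proof. apply is_derive_unique. Qed.

Lemma derivable_pt_lim_Rinv (v : R -> R) (t l : R) :
  derivable_pt_lim v t l -> v t <> 0 ->
  derivable_pt_lim (fun s => / v s) t (- l / v t ^ 2).
Proof.
  intros Hv Hv0. apply is_derive_Reals, is_derive_inv; [apply is_derive_Reals |]; assumption.
Qed.

Lemma lt_of_derivable_pt_lim_pos (f f' : R -> R) (x y : R) : x < y ->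
  (forall c, x <= c <= y -> derivable_pt_lim f c (f' c)) ->
  (forall c, x < c < y -> 0 < f' c) -> f x < f y.
Proof.
  intros Hxy Hd Hpos.
  destruct (MVT_cor2 f f' x y Hxy Hd) as [c [Hc Hcxy]].
  specialize (Hpos c Hcxy). nra.
Qed.

Lemma eq_of_derivable_pt_lim_0 (f : R -> R) (lo hi x y : R) :
  (forall t, lo < t < hi -> derivable_pt_lim f t 0) ->
  lo < x < hi -> lo < y < hi -> f x = f y.
Proof.
  intros Hd.
  assert (Hlt : forall x y, lo < x < hi -> lo < y < hi -> x < y -> f x = f y).
  { intros u v Hu Hv Huv.
    destruct (MVT_cor2 f (fun _ => 0) u v Huv) as [c [Hc _]];
      [intros c Hc; apply Hd; lra | lra]. }
  intros Hx Hy. destruct (Rtotal_order x y) as [H | [H | H]].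
  - now apply Hlt.
  - now subst.
  - symmetry. now apply Hlt.
Qed.

Lemma le_of_interval_gt (T lo hi : R) : T < hi ->
  (forall t, lo < t < hi -> T < t) -> T <= lo.
Proof.
  intros HT H. destruct (Rle_lt_dec T lo) as [Hle | Hlt]; [exact Hle |].
  specialize (H T). lra.
Qed.

(** * The separating primitive and its inverse *)

Lemma mul_sqr_lt_1_le (b u v : R) : 0 <= b -> 0 <= u <= v -> b * v ^ 2 < 1 ->
  b * u ^ 2 < 1.
Proof. intros Hb Huv Hbv. assert (u ^ 2 <= v ^ 2) by nra. nra. Qed.

Definition fb (b u : R) : R := u ^ 2 / (1 - b * u ^ 2) ^ 3.

Definition Fb (b v : R) : R := RInt (fb b) 0 v.

Lemma fb_pos (b u : R) : 0 < u -> b * u ^ 2 < 1 -> 0 < fb b u.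
Proof. intros Hu Hbu. apply Rdiv_lt_0_compat; [nra | apply pow_lt; lra]. Qed.

Lemma fb_continuous (b u : R) : b * u ^ 2 < 1 -> continuous (fb b) u.
Proof.
  intros Hbu. apply (ex_derive_continuous (fb b)). unfold fb. auto_derive.
  apply Rgt_not_eq. repeat apply Rmult_lt_0_compat; lra.
Qed.

Lemma Fb_derivable_pt_lim (b v : R) : 0 <= b -> b * v ^ 2 < 1 ->
  derivable_pt_lim (Fb b) v (fb b v).
Proof.
  intros Hb Hbv. apply is_derive_Reals.
  apply is_derive_RInt with 0; [| now apply fb_continuous].
  assert (Hnear : locally v (fun y => b * y ^ 2 < 1)).
  { assert (Hc : continuous (fun y => b * y ^ 2) v)
      by (apply (ex_derive_continuous (fun y => b * y ^ 2)); auto_derive; auto).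
    apply (Hc (fun r => r < 1)). now apply open_lt. }
  apply (filter_imp (fun y => b * y ^ 2 < 1)); [intros y Hby | exact Hnear].
  apply (RInt_correct (fb b)), ex_RInt_continuous. intros z Hz. apply fb_continuous.
  assert (z ^ 2 <= y ^ 2).
  { destruct (Rle_dec 0 y); [rewrite Rmin_left, Rmax_right in Hz
                             | rewrite Rmin_right, Rmax_left in Hz]; nra. }
  nra.
Qed.

Lemma Fb_0 (b : R) : Fb b 0 = 0.
Proof. unfold Fb. now rewrite RInt_point. Qed.

Lemma Fb_lt (b x y : R) : 0 <= b -> 0 <= x < y -> b * y ^ 2 < 1 -> Fb b x < Fb b y.
Proof.
  intros Hb Hxy Hby.
  apply (lt_of_derivable_pt_lim_pos _ (fb b)); [lra | intros c Hc | intros c Hc];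
    (assert (Hbc : b * c ^ 2 < 1) by (apply mul_sqr_lt_1_le with y; lra)).
  - now apply Fb_derivable_pt_lim.
  - apply fb_pos; lra.
Qed.

Lemma Fb_pos (b v : R) : 0 <= b -> 0 < v -> b * v ^ 2 < 1 -> 0 < Fb b v.
Proof. intros. rewrite <- (Fb_0 b). apply Fb_lt; lra. Qed.

Lemma Fb_unbounded (b M : R) : 0 <= b < 1 ->
  exists v, 0 < v /\ b * v ^ 2 < 1 /\ M < Fb b v.
Proof.
  intros Hb.
  pose (B u := u ^ 2 / (2 * (1 - b * u ^ 2))).
  set (X := / (1 - b) + 2 * (Rabs (M - Fb b 1 + B 1) + 1)).
  set (w := X / (1 + b * X)).
  assert (Hinv : 0 < / (1 - b)) by (apply Rinv_0_lt_compat; lra).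
  assert (HX : 1 < X * (1 - b)).
  { assert (Hr := Rabs_pos (M - Fb b 1 + B 1)).
    unfold X. rewrite Rmult_plus_distr_r, Rinv_l by lra. nra. }
  assert (Hw1 : 1 < w).
  { unfold w. apply (Rmult_lt_reg_r (1 + b * X)); [nra |].
    unfold Rdiv. rewrite Rmult_assoc, Rinv_l; nra. }
  assert (Hbw : 1 - b * w = / (1 + b * X)) by (unfold w; field; nra).
  assert (Hs : sqrt w ^ 2 = w) by (rewrite <- Rsqr_pow2; apply Rsqr_sqrt; lra).
  assert (Hs1 : 1 < sqrt w) by (rewrite <- sqrt_1; apply sqrt_lt_1_alt; lra).
  assert (Hbs : b * sqrt w ^ 2 < 1).
  { rewrite Hs. pose proof (Rinv_0_lt_compat (1 + b * X)). nra. }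
  assert (HBw : B (sqrt w) = X / 2) by (unfold B; rewrite Hs, Hbw; unfold w; field; nra).
  (* for u >= 1 the integrand dominates u / (1 - b u^2)^2, the derivative of B *)
  assert (Hcmp : Fb b 1 - B 1 < Fb b (sqrt w) - B (sqrt w)).
  { apply (lt_of_derivable_pt_lim_pos (fun u => Fb b u - B u)
             (fun u => fb b u - u / (1 - b * u ^ 2) ^ 2));
      [lra | intros c Hc | intros c Hc];
      (assert (Hbc : b * c ^ 2 < 1) by (apply mul_sqr_lt_1_le with (sqrt w); lra)).
    - apply derivable_pt_lim_minus; [apply Fb_derivable_pt_lim; lra |].
      apply is_derive_Reals. unfold B. auto_derive; [| field]; lra.
    - replace (fb b c - c / (1 - b * c ^ 2) ^ 2)
        with (c * (c - 1 + b * c ^ 2) / (1 - b * c ^ 2) ^ 3) by (unfold fb; field; lra).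
      apply Rdiv_lt_0_compat; [| apply pow_lt; lra]. assert (0 <= b * c ^ 2) by nra. nra. }
  exists (sqrt w). split; [lra | split; [exact Hbs |]].
  pose proof (Rle_abs (M - Fb b 1 + B 1)). unfold X in HBw. lra.
Qed.

(* The inverse of [Fb b] on (0, +oo); its value for [s <= 0] is junk. *)
Definition Gb (b s : R) : R :=
  epsilon (inhabits 0) (fun v => 0 < v /\ b * v ^ 2 < 1 /\ Fb b v = s).

Lemma Gb_spec (b s : R) : 0 <= b < 1 -> 0 < s ->
  0 < Gb b s /\ b * Gb b s ^ 2 < 1 /\ Fb b (Gb b s) = s.
Proof.
  intros Hb Hs. unfold Gb. apply epsilon_spec.
  destruct (Fb_unbounded b s Hb) as [v [Hv [Hbv Hsv]]].
  destruct (IVT_interv (fun u => Fb b u - s) 0 v) as [z [Hz Hzs]].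
  - intros u Hu. apply derivable_continuous_pt. exists (fb b u - 0).
    apply derivable_pt_lim_minus; [| apply derivable_pt_lim_const].
    apply Fb_derivable_pt_lim; [lra | apply mul_sqr_lt_1_le with v; lra].
  - exact Hv.
  - rewrite Fb_0. lra.
  - lra.
  - assert (z <> 0) by (intros ->; rewrite Fb_0 in Hzs; lra).
    exists z. split; [lra | split; [apply mul_sqr_lt_1_le with v; lra | lra]].
Qed.

Lemma Fb_Gb (b s : R) : 0 <= b < 1 -> 0 < s -> Fb b (Gb b s) = s.
Proof. intros Hb Hs. now apply Gb_spec. Qed.

Lemma Gb_Fb (b v : R) : 0 <= b < 1 -> 0 < v -> b * v ^ 2 < 1 -> Gb b (Fb b v) = v.
Proof.
  intros Hb Hv Hbv.
  destruct (Gb_spec b (Fb b v)) as (Hg & Hbg & HF); [exact Hb | apply Fb_pos; lra |].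
  destruct (Rtotal_order (Gb b (Fb b v)) v) as [H | [H | H]]; [| exact H |].
  - pose proof (Fb_lt b _ v (proj1 Hb) (conj (Rlt_le _ _ Hg) H) Hbv). lra.
  - pose proof (Fb_lt b v _ (proj1 Hb) (conj (Rlt_le _ _ Hv) H) Hbg). lra.
Qed.

Lemma Gb_lt (b s1 s2 : R) : 0 <= b < 1 -> 0 < s1 < s2 -> Gb b s1 < Gb b s2.
Proof.
  intros Hb Hs.
  destruct (Gb_spec b s1) as (H1 & Hb1 & HF1); [exact Hb | lra |].
  destruct (Gb_spec b s2) as (H2 & Hb2 & HF2); [exact Hb | lra |].
  destruct (Rtotal_order (Gb b s1) (Gb b s2)) as [H | [H | H]]; [exact H | |].
  - assert (s1 = s2) by (rewrite <- HF1, <- HF2, H; reflexivity). lra.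
  - pose proof (Fb_lt b _ _ (proj1 Hb) (conj (Rlt_le _ _ H2) H) Hb1). lra.
Qed.

Lemma Gb_le (b s1 s2 : R) : 0 <= b < 1 -> 0 < s1 <= s2 -> Gb b s1 <= Gb b s2.
Proof.
  intros Hb [Hs1 [Hlt | ->]]; [left; apply Gb_lt; lra | right; reflexivity].
Qed.

Lemma Gb_continuity_pt (b s : R) : 0 <= b < 1 -> 0 < s -> continuity_pt (Gb b) s.
Proof.
  intros Hb Hs.
  destruct (Gb_spec b (s / 2)) as (Hl & _ & HFl); [exact Hb | lra |].
  destruct (Gb_spec b (s + 1)) as (_ & Hbu & HFu); [exact Hb | lra |].
  apply (continuity_pt_recip_interv (Fb b) (Gb b) (Gb b (s / 2)) (Gb b (s + 1)));
    rewrite ?HFl, ?HFu.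
  - apply Gb_lt; lra.
  - intros x y Hx Hxy Hy.
    apply Fb_lt; [lra | lra | apply mul_sqr_lt_1_le with (Gb b (s + 1)); lra].
  - intros x Hx1 Hx2. unfold comp, id. apply Fb_Gb; lra.
  - intros x Hx1 Hx2. split; apply Gb_le; lra.
  - intros v Hv. apply derivable_continuous_pt. exists (fb b v).
    apply Fb_derivable_pt_lim; [lra | apply mul_sqr_lt_1_le with (Gb b (s + 1)); lra].
  - lra.
Qed.

Lemma Gb_derivable_pt_lim (b s : R) : 0 <= b < 1 -> 0 < s ->
  derivable_pt_lim (Gb b) s (/ fb b (Gb b s)).
Proof.
  intros Hb Hs.
  destruct (Gb_spec b s) as (Hg & Hbg & HF); [exact Hb | exact Hs |].
  destruct (Gb_spec b (s / 2)) as (Hl & _ & _); [exact Hb | lra |].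
  destruct (Gb_spec b (s + 1)) as (_ & Hbu & _); [exact Hb | lra |].
  assert (Hder : forall v, Gb b (s / 2) <= v <= Gb b (s + 1) ->
                   derivable_pt_lim (Fb b) v (fb b v)).
  { intros v Hv. apply Fb_derivable_pt_lim; [lra |].
    apply mul_sqr_lt_1_le with (Gb b (s + 1)); lra. }
  assert (Hin : Gb b (s / 2) <= Gb b s <= Gb b (s + 1)) by (split; apply Gb_le; lra).
  pose proof (derivable_pt_lim_recip_interv (Fb b) (Gb b) (s / 2) (s + 1) s
    (fun v Hv => exist _ (fb b v) (Hder v Hv)) (Gb_continuity_pt b s Hb Hs)
    ltac:(lra) ltac:(lra) Hin) as H.
  simpl in H. unfold Rdiv in H. rewrite Rmult_1_l in H. apply H.
  - intros x Hx. unfold comp, id. apply Fb_Gb; lra.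
  - apply Rgt_not_eq, fb_pos; assumption.
Qed.

(** * The reduced scalar equation *)

Definition Tb (b K : R) : R := - Fb b 1 / K.

(* The solution of [V' = K (1 - b V^2)^3 / V^2], [V 0 = 1], on [(Tb b K, +oo)]. *)
Definition Vsol (b K t : R) : R := Gb b (K * t + Fb b 1).

(* [g1] in terms of [V], by the conservation law. *)
Definition g1_of (b v : R) : R := (1 - b) * v / (1 - b * v ^ 2).

Lemma g1_of_derivable_pt_lim (b : R) (v : R -> R) (t l : R) :
  derivable_pt_lim v t l -> b * v t ^ 2 <> 1 ->
  derivable_pt_lim (fun s => g1_of b (v s)) t
    ((1 - b) * (1 + b * v t ^ 2) / (1 - b * v t ^ 2) ^ 2 * l).
Proof.
  intros Hv Hbv. apply is_derive_Reals. apply is_derive_Reals in Hv. unfold g1_of.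
  auto_derive.
  - repeat split; try (eexists; eassumption). contradict Hbv; lra.
  - rewrite (Derive_eta _ _ _ Hv). field. contradict Hbv; lra.
Qed.

Section ScalarEquation.

Variables b K : R.
Hypothesis Hb : 0 <= b < 1.
Hypothesis HK : 0 < K.

Lemma Tb_lt_iff (t : R) : Tb b K < t <-> 0 < K * t + Fb b 1.
Proof.
  assert (E : K * Tb b K = - Fb b 1) by (unfold Tb; field; lra).
  split; intros H; nra.
Qed.

Lemma Tb_neg : Tb b K < 0.
Proof. apply Tb_lt_iff. rewrite Rmult_0_r, Rplus_0_l. apply Fb_pos; lra. Qed.

Lemma Vsol_spec (t : R) : Tb b K < t -> 0 < Vsol b K t /\ b * Vsol b K t ^ 2 < 1.
Proof.
  intros Ht. apply Tb_lt_iff in Ht. now destruct (Gb_spec b _ Hb Ht) as (H1 & H2 & _).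
Qed.

Lemma Vsol_0 : Vsol b K 0 = 1.
Proof. unfold Vsol. rewrite Rmult_0_r, Rplus_0_l. apply Gb_Fb; lra. Qed.

Lemma Vsol_derivable_pt_lim (t : R) : Tb b K < t ->
  derivable_pt_lim (Vsol b K) t (K * (1 - b * Vsol b K t ^ 2) ^ 3 / Vsol b K t ^ 2).
Proof.
  intros Ht. destruct (Vsol_spec t Ht) as [Hv Hbv]. apply Tb_lt_iff in Ht.
  apply derivable_pt_lim_eq_deriv with (/ fb b (Vsol b K t) * K).
  - apply (derivable_pt_lim_comp (fun s => K * s + Fb b 1) (Gb b)).
    + apply is_derive_Reals. auto_derive; [exact I | ring].
    + now apply Gb_derivable_pt_lim.
  - unfold fb. field. split; lra.
Qed.

Lemma Vsol_right_lim : right_lim (Vsol b K) (Tb b K) 0.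
Proof.
  intros eps Heps.
  set (e := Rmin eps 1).
  assert (He : 0 < e <= eps /\ e <= 1)
    by (unfold e; split; [split; [apply Rmin_glb_lt | apply Rmin_l] | apply Rmin_r]; lra).
  assert (Hbe : b * e ^ 2 < 1) by (apply mul_sqr_lt_1_le with 1; lra).
  assert (HFe : 0 < Fb b e) by (apply Fb_pos; lra).
  exists (Fb b e / K). split; [now apply Rdiv_lt_0_compat |].
  intros t Ht. destruct (Vsol_spec t (proj1 Ht)) as [Hv _].
  assert (Hs : 0 < K * t + Fb b 1 < Fb b e).
  { split; [now apply Tb_lt_iff |].
    assert (E : K * (Tb b K + Fb b e / K) = Fb b e - Fb b 1) by (unfold Tb; field; lra).
    nra. }
  assert (Vsol b K t < e).
  { rewrite <- (Gb_Fb b e) by lra. unfold Vsol. apply Gb_lt; lra. }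
  rewrite Rminus_0_r, Rabs_pos_eq; lra.
Qed.

Lemma g1_of_Vsol_right_lim : right_lim (fun t => g1_of b (Vsol b K t)) (Tb b K) 0.
Proof.
  intros eps Heps.
  destruct (Vsol_right_lim (Rmin eps 1)) as [d [Hd Hnear]]; [apply Rmin_glb_lt; lra |].
  exists d. split; [exact Hd |]. intros t Ht.
  specialize (Hnear t Ht). destruct (Vsol_spec t (proj1 Ht)) as [Hv Hbv].
  pose proof (Rmin_l eps 1). pose proof (Rmin_r eps 1).
  rewrite Rminus_0_r, Rabs_pos_eq in Hnear by lra.
  set (V := Vsol b K t) in *.
  assert (Hg : 0 <= g1_of b V <= V).
  { unfold g1_of. split; [apply Rdiv_le_0_compat; nra |].
    apply (Rmult_le_reg_r (1 - b * V ^ 2)); [lra |].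
    unfold Rdiv. rewrite Rmult_assoc, Rinv_l by lra.
    assert (0 <= b * V * (1 - V ^ 2)) by (apply Rmult_le_pos; nra). nra. }
  rewrite Rminus_0_r, Rabs_pos_eq; lra.
Qed.

Lemma inv_Vsol_right_lim_infty : right_lim_infty (fun t => / Vsol b K t) (Tb b K).
Proof.
  intros M. assert (HM : 0 < Rabs M + 1) by (pose proof (Rabs_pos M); lra).
  destruct (Vsol_right_lim (/ (Rabs M + 1))) as [d [Hd Hnear]];
    [now apply Rinv_0_lt_compat |].
  exists d. split; [exact Hd |]. intros t Ht.
  specialize (Hnear t Ht). destruct (Vsol_spec t (proj1 Ht)) as [Hv _].
  rewrite Rminus_0_r, Rabs_pos_eq in Hnear by lra.
  apply Rinv_lt_contravar in Hnear; [| nra]. rewrite Rinv_inv in Hnear.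
  pose proof (Rle_abs M). lra.
Qed.

Lemma Vsol_unique (lo hi : R) (v : R -> R) : lo < 0 < hi ->
  (forall t, lo < t < hi -> 0 < v t /\ b * v t ^ 2 < 1 /\
     derivable_pt_lim v t (K * (1 - b * v t ^ 2) ^ 3 / v t ^ 2)) ->
  v 0 = 1 ->
  Tb b K <= lo /\ forall t, lo < t < hi -> v t = Vsol b K t.
Proof.
  intros Hlh Hv Hv0.
  assert (Hsep : forall t, lo < t < hi -> Fb b (v t) = K * t + Fb b 1).
  { intros t Ht.
    assert (E : Fb b (v t) - K * t = Fb b (v 0) - K * 0).
    { apply (eq_of_derivable_pt_lim_0 (fun s => Fb b (v s) - K * s) lo hi);
        [| exact Ht | lra].
      intros s Hs. destruct (Hv s Hs) as (Hpos & Hbv & Hder).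
      apply derivable_pt_lim_eq_deriv
        with (fb b (v s) * (K * (1 - b * v s ^ 2) ^ 3 / v s ^ 2) - K * 1).
      - apply derivable_pt_lim_minus.
        + apply (derivable_pt_lim_comp v (Fb b)); [exact Hder |].
          apply Fb_derivable_pt_lim; lra.
        + apply derivable_pt_lim_scal, derivable_pt_lim_id.
      - unfold fb. field. split; lra. }
    rewrite Hv0 in E. lra. }
  split.
  - apply le_of_interval_gt with hi; [pose proof Tb_neg; lra |].
    intros t Ht. apply Tb_lt_iff. rewrite <- (Hsep t Ht).
    destruct (Hv t Ht) as (Hpos & Hbv & _). apply Fb_pos; lra.
  - intros t Ht. unfold Vsol. rewrite <- (Hsep t Ht).
    destruct (Hv t Ht) as (Hpos & Hbv & _). symmetry. now apply Gb_Fb.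
Qed.

End ScalarEquation.

(** * The flow in the three regimes *)

Lemma sol_on_conserved (a lo hi : R) (h1 h3 : R -> R) : lo < 0 < hi ->
  sol_on a (fun t => lo < t < hi) h1 h3 ->
  forall t, lo < t < hi -> h1 t * (a ^ 2 - h3 t ^ 2) = (a ^ 2 - 1) * h3 t.
Proof.
  intros Hlh (H10 & H30 & Hs) t Ht.
  assert (E : h1 t * (a ^ 2 / h3 t - h3 t) = h1 0 * (a ^ 2 / h3 0 - h3 0)).
  { apply (eq_of_derivable_pt_lim_0 (fun s => h1 s * (a ^ 2 / h3 s - h3 s)) lo hi);
      [| exact Ht | lra].
    intros u Hu. destruct (Hs u Hu) as (P1 & P3 & D1 & D3).
    apply is_derive_Reals in D1, D3. apply is_derive_Reals. auto_derive.
    - repeat split; try (eexists; eassumption). lra.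
    - rewrite (Derive_eta _ _ _ D1), (Derive_eta _ _ _ D3). field. lra. }
  rewrite H10, H30 in E. destruct (Hs t Ht) as (P1 & P3 & _).
  replace (h1 t * (a ^ 2 - h3 t ^ 2)) with (h1 t * (a ^ 2 / h3 t - h3 t) * h3 t)
    by (field; lra).
  rewrite E. field.
Qed.

Definition maximal_flow (a T : R) : Prop :=
  T < 0 /\
  exists g1 g3 : R -> R,
    sol_on a (fun t => T < t) g1 g3 /\
    (forall (lo hi : R) (h1 h3 : R -> R),
        lo < 0 < hi ->
        sol_on a (fun t => lo < t < hi) h1 h3 ->
        T <= lo /\
        forall t, lo < t < hi -> h1 t = g1 t /\ h3 t = g3 t) /\
    right_lim g1 T 0 /\
    (Rabs a < 1 -> right_lim_infty g3 T) /\
    (Rabs a = 1 -> right_lim g3 T 1) /\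
    (1 < Rabs a -> right_lim g3 T 0).

Section Subcritical.

Variable a : R.
Hypothesis Ha : a ^ 2 < 1.

Let b := a ^ 2.
Let K := / (1 - a ^ 2) ^ 2.

Let Hb : 0 <= b < 1.
Proof. unfold b. split; [apply pow2_ge_0 | exact Ha]. Qed.

Let HK : 0 < K.
Proof. unfold K. apply Rinv_0_lt_compat, pow_lt. lra. Qed.

Lemma subcritical_sol :
  sol_on a (fun t => Tb b K < t) (fun t => g1_of b (Vsol b K t)) (fun t => / Vsol b K t).
Proof.
  split; [| split].
  - rewrite Vsol_0 by assumption. unfold g1_of. field. unfold b. lra.
  - rewrite Vsol_0 by assumption. apply Rinv_1.
  - intros t Ht. destruct (Vsol_spec b K Hb HK t Ht) as [Hv Hbv].
    pose proof (Vsol_derivable_pt_lim b K Hb HK t Ht) as HD.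
    split; [| split; [| split]].
    + unfold g1_of. apply Rdiv_lt_0_compat; nra.
    + now apply Rinv_0_lt_compat.
    + eapply derivable_pt_lim_eq_deriv; [apply g1_of_derivable_pt_lim; [exact HD | lra] |].
      set (V := Vsol b K t) in *. unfold g1_of, K. fold b. field. repeat split; lra.
    + eapply derivable_pt_lim_eq_deriv; [apply derivable_pt_lim_Rinv; [exact HD | lra] |].
      set (V := Vsol b K t) in *. unfold g1_of, K. fold b. field. repeat split; lra.
Qed.

Lemma subcritical_maximal (lo hi : R) (h1 h3 : R -> R) : lo < 0 < hi ->
  sol_on a (fun t => lo < t < hi) h1 h3 ->
  Tb b K <= lo /\
  forall t, lo < t < hi -> h1 t = g1_of b (Vsol b K t) /\ h3 t = / Vsol b K t.
Proof.
  intros Hlh Hsol.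
  pose proof (sol_on_conserved a lo hi h1 h3 Hlh Hsol) as Hc.
  destruct Hsol as (H10 & H30 & Hs).
  assert (Hh : forall t, lo < t < hi -> b < h3 t ^ 2 /\ h1 t = g1_of b (/ h3 t)).
  { intros t Ht. destruct (Hs t Ht) as (P1 & P3 & _).
    specialize (Hc t Ht). fold b in Hc.
    assert (Hb3 : b < h3 t ^ 2) by nra. split; [exact Hb3 |].
    apply (Rmult_eq_reg_r (b - h3 t ^ 2)); [| lra].
    rewrite Hc. unfold g1_of. field. split; [lra | nra]. }
  destruct (Vsol_unique b K Hb HK lo hi (fun t => / h3 t) Hlh) as [HT Heq].
  - intros t Ht. destruct (Hs t Ht) as (P1 & P3 & _ & D3). destruct (Hh t Ht) as [Hb3 E1].
    split; [| split].
    + now apply Rinv_0_lt_compat.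
    + rewrite pow_inv. apply (Rmult_lt_reg_r (h3 t ^ 2)); [nra |].
      rewrite Rmult_assoc, Rinv_l by nra. lra.
    + eapply derivable_pt_lim_eq_deriv; [apply derivable_pt_lim_Rinv; [exact D3 | lra] |].
      fold b. rewrite E1. unfold g1_of, K. fold b.
      field. split; [lra | split; [unfold b; lra | nra]].
  - rewrite H30. apply Rinv_1.
  - split; [exact HT |]. intros t Ht. specialize (Heq t Ht). simpl in Heq. rewrite <- Heq, Rinv_inv.
    split; [apply Hh |]; easy.
Qed.

Lemma subcritical_flow : maximal_flow a (Tb b K).
Proof.
  split; [now apply Tb_neg |].
  exists (fun t => g1_of b (Vsol b K t)), (fun t => / Vsol b K t).
  split; [exact subcritical_sol |].
  split; [exact subcritical_maximal |].
  split; [now apply g1_of_Vsol_right_lim |].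
  split; [| split]; intros Habs; [now apply inv_Vsol_right_lim_infty | exfalso..];
    rewrite <- pow2_abs in Ha; nra.
Qed.

End Subcritical.

Section Supercritical.

Variable a : R.
Hypothesis Ha : 1 < a ^ 2.

Let b := / a ^ 2.
Let K := (a ^ 2) ^ 3 / (a ^ 2 - 1) ^ 2.

Let Hb : 0 <= b < 1.
Proof.
  unfold b. split; [left; apply Rinv_0_lt_compat; lra |].
  rewrite <- Rinv_1. apply Rinv_lt_contravar; lra.
Qed.

Let HK : 0 < K.
Proof. unfold K. apply Rdiv_lt_0_compat; apply pow_lt; lra. Qed.

Let Ha0 : a <> 0.
Proof. intros ->. lra. Qed.

Let below_pole_iff (v : R) : b * v ^ 2 < 1 <-> v ^ 2 < a ^ 2.
Proof.
  unfold b. rewrite <- (Rmult_1_r (a ^ 2)) at 2.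
  split; intros H.
  - apply (Rmult_lt_compat_l (a ^ 2)) in H; [| lra].
    now rewrite <- Rmult_assoc, Rinv_r, Rmult_1_l in H by lra.
  - apply (Rmult_lt_reg_l (a ^ 2)); [lra |].
    now rewrite <- Rmult_assoc, Rinv_r, Rmult_1_l by lra.
Qed.

Lemma supercritical_sol :
  sol_on a (fun t => Tb b K < t) (fun t => g1_of b (Vsol b K t)) (Vsol b K).
Proof.
  split; [| split].
  - rewrite Vsol_0 by assumption. unfold g1_of. field. lra.
  - now apply Vsol_0.
  - intros t Ht. destruct (Vsol_spec b K Hb HK t Ht) as [Hv Hbv].
    pose proof (Vsol_derivable_pt_lim b K Hb HK t Ht) as HD.
    split; [| split; [| split]].
    + unfold g1_of. apply Rdiv_lt_0_compat; nra.
    + exact Hv.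
    + eapply derivable_pt_lim_eq_deriv; [apply g1_of_derivable_pt_lim; [exact HD | lra] |].
      set (V := Vsol b K t) in *. apply below_pole_iff in Hbv.
      unfold g1_of, K, b. field. repeat split; lra.
    + eapply derivable_pt_lim_eq_deriv; [exact HD |].
      set (V := Vsol b K t) in *. apply below_pole_iff in Hbv.
      unfold g1_of, K, b. field. repeat split; lra.
Qed.

Lemma supercritical_maximal (lo hi : R) (h1 h3 : R -> R) : lo < 0 < hi ->
  sol_on a (fun t => lo < t < hi) h1 h3 ->
  Tb b K <= lo /\
  forall t, lo < t < hi -> h1 t = g1_of b (Vsol b K t) /\ h3 t = Vsol b K t.
Proof.
  intros Hlh Hsol.
  pose proof (sol_on_conserved a lo hi h1 h3 Hlh Hsol) as Hc.
  destruct Hsol as (H10 & H30 & Hs).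
  assert (Hh : forall t, lo < t < hi -> h3 t ^ 2 < a ^ 2 /\ h1 t = g1_of b (h3 t)).
  { intros t Ht. destruct (Hs t Ht) as (P1 & P3 & _). specialize (Hc t Ht).
    assert (H3a : h3 t ^ 2 < a ^ 2) by nra. split; [exact H3a |].
    apply (Rmult_eq_reg_r (a ^ 2 - h3 t ^ 2)); [| lra].
    rewrite Hc. unfold g1_of, b. field. lra. }
  destruct (Vsol_unique b K Hb HK lo hi h3 Hlh) as [HT Heq].
  - intros t Ht. destruct (Hs t Ht) as (P1 & P3 & _ & D3). destruct (Hh t Ht) as [H3a E1].
    split; [exact P3 | split; [now apply below_pole_iff |]].
    eapply derivable_pt_lim_eq_deriv; [exact D3 |].
    rewrite E1. unfold g1_of, K, b. field. repeat split; lra.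
  - exact H30.
  - split; [exact HT |]. intros t Ht. rewrite <- (Heq t Ht).
    split; [apply Hh |]; easy.
Qed.

Lemma supercritical_flow : maximal_flow a (Tb b K).
Proof.
  split; [now apply Tb_neg |].
  exists (fun t => g1_of b (Vsol b K t)), (Vsol b K).
  split; [exact supercritical_sol |].
  split; [exact supercritical_maximal |].
  split; [now apply g1_of_Vsol_right_lim |].
  split; [| split]; intros Habs; [exfalso.. | now apply Vsol_right_lim];
    pose proof (Rabs_pos a); rewrite <- pow2_abs in Ha; nra.
Qed.

End Supercritical.

Section Critical.

Variable a : R.
Hypothesis Ha : a ^ 2 = 1.

Lemma critical_sol : sol_on a (fun t => - / 4 < t) (fun t => sqrt (1 + 4 * t)) (fun _ => 1).
Proof.
  split; [| split].
  - rewrite Rmult_0_r, Rplus_0_r. apply sqrt_1.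
  - reflexivity.
  - intros t Ht. assert (Hs : 0 < sqrt (1 + 4 * t)) by (apply sqrt_lt_R0; lra).
    rewrite Ha. split; [exact Hs | split; [lra | split]].
    + apply is_derive_Reals. auto_derive; [lra |].
      field. lra.
    + apply is_derive_Reals. auto_derive; [exact I |]. field. lra.
Qed.

Lemma critical_maximal (lo hi : R) (h1 h3 : R -> R) : lo < 0 < hi ->
  sol_on a (fun t => lo < t < hi) h1 h3 ->
  - / 4 <= lo /\ forall t, lo < t < hi -> h1 t = sqrt (1 + 4 * t) /\ h3 t = 1.
Proof.
  intros Hlh Hsol.
  pose proof (sol_on_conserved a lo hi h1 h3 Hlh Hsol) as Hc.
  destruct Hsol as (H10 & H30 & Hs).
  assert (H3 : forall t, lo < t < hi -> h3 t = 1).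
  { intros t Ht. destruct (Hs t Ht) as (P1 & P3 & _). specialize (Hc t Ht).
    rewrite Ha in Hc. assert (1 - h3 t ^ 2 = 0) by (apply (Rmult_eq_reg_l (h1 t)); lra).
    nra. }
  (* since g3 = 1, the first equation reads (g1^2)' = 4 *)
  assert (Hsq : forall t, lo < t < hi -> h1 t ^ 2 = 1 + 4 * t).
  { intros t Ht.
    assert (E : h1 t ^ 2 - 4 * t = h1 0 ^ 2 - 4 * 0).
    { apply (eq_of_derivable_pt_lim_0 (fun s => h1 s ^ 2 - 4 * s) lo hi); [| exact Ht | lra].
      intros s Hs'. destruct (Hs s Hs') as (P1 & _ & D1 & _).
      rewrite Ha, (H3 s Hs') in D1. apply is_derive_Reals in D1. apply is_derive_Reals.
      auto_derive; [eexists; eassumption |]. rewrite (Derive_eta _ _ _ D1). field. lra. }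
    rewrite H10 in E. lra. }
  split.
  - apply le_of_interval_gt with hi; [lra |]. intros t Ht.
    destruct (Hs t Ht) as (P1 & _). specialize (Hsq t Ht). nra.
  - intros t Ht. split; [| now apply H3].
    destruct (Hs t Ht) as (P1 & _). rewrite <- (Hsq t Ht), sqrt_pow2; lra.
Qed.

Lemma critical_flow : maximal_flow a (- / 4).
Proof.
  split; [lra |].
  exists (fun t => sqrt (1 + 4 * t)), (fun _ => 1).
  split; [exact critical_sol |].
  split; [exact critical_maximal |].
  split; [| split; [| split]].
  - intros eps Heps. exists (eps ^ 2 / 4). split; [nra |]. intros t Ht.
    rewrite Rminus_0_r, Rabs_pos_eq by apply sqrt_pos.
    rewrite <- (sqrt_pow2 eps) by lra. apply sqrt_lt_1_alt. lra.
  - intros Habs. exfalso. pose proof (Rabs_pos a). rewrite <- pow2_abs in Ha. nra.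
  - intros _ eps Heps. exists 1. split; [lra |]. intros t _.
    now rewrite Rminus_eq_0, Rabs_R0.
  - intros Habs. exfalso. rewrite <- pow2_abs in Ha. nra.
Qed.

End Critical.

Lemma Fb_0_1 : Fb 0 1 = 1 / 3.
Proof.
  unfold Fb. apply is_RInt_unique.
  replace (1 / 3) with (1 ^ 3 / 3 - 0 ^ 3 / 3) by field.
  apply (is_RInt_derive (fun u => u ^ 3 / 3)).
  - intros u _. auto_derive; [exact I |]. unfold fb. field.
  - intros u _. apply fb_continuous. lra.
Qed.

Definition Tmin (a : R) : R :=
  if Req_dec_T (a ^ 2) 1 then - / 4
  else if Rlt_dec (a ^ 2) 1 then Tb (a ^ 2) (/ (1 - a ^ 2) ^ 2)
  else Tb (/ a ^ 2) ((a ^ 2) ^ 3 / (a ^ 2 - 1) ^ 2).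

Theorem mainTheorem9 :
  exists Tmin : R -> R,
    (forall a, Tmin (- a) = Tmin a) /\
    Tmin 0 = - (1 / 3) /\
    forall a : R,
      Tmin a < 0 /\
      exists g1 g3 : R -> R,
        sol_on a (fun t => Tmin a < t) g1 g3 /\
        (forall (lo hi : R) (h1 h3 : R -> R),
            lo < 0 < hi ->
            sol_on a (fun t => lo < t < hi) h1 h3 ->
            Tmin a <= lo /\
            forall t, lo < t < hi -> h1 t = g1 t /\ h3 t = g3 t) /\
        right_lim g1 (Tmin a) 0 /\
        (Rabs a < 1 -> right_lim_infty g3 (Tmin a)) /\
        (Rabs a = 1 -> right_lim g3 (Tmin a) 1) /\
        (1 < Rabs a -> right_lim g3 (Tmin a) 0).
Proof.
  exists Tmin. split; [| split].
  - intros a. unfold Tmin. now replace ((- a) ^ 2) with (a ^ 2) by ring.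
  - unfold Tmin. replace (0 ^ 2) with 0 by ring.
    destruct (Req_dec_T 0 1); [lra |]. destruct (Rlt_dec 0 1); [| lra].
    unfold Tb. rewrite Fb_0_1. field.
  - intros a. fold (maximal_flow a (Tmin a)). unfold Tmin.
    destruct (Req_dec_T (a ^ 2) 1) as [E | E]; [now apply critical_flow |].
    destruct (Rlt_dec (a ^ 2) 1) as [L | L]; [now apply subcritical_flow |].
    apply supercritical_flow. destruct (Rtotal_order (a ^ 2) 1) as [? | [? | ?]]; tauto.
Qed.
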